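(* There is no contravariant functor $F\colon\mathsf{Ring}\to\mathsf{Set}$ whose restriction to the full subcategory $\mathsf{CommRing}$ is isomorphic to $\operatorname{Spec}$ and such that, for every ring $R$, the set $F(R)$ is in bijection with the set of prime ideals of $R$.
   Context: Rings are unital and homomorphisms preserve the identity. A (two-sided) ideal $P$ of a ring $R$ is prime if $P\neq R$ and for all two-sided ideals $I,J$ with $IJ\subseteq P$, either $I\subseteq P$ or $J\subseteq P$. $\operatorname{Spec}$ is the contravariant functor on commutative rings sending a ring to its set of prime ideals and a homomorphism $f$ to $P\mapsto f^{-1}(P)$. *)

(* Rings = pzRingType (unital, possibly the zero ring);
   ring homomorphisms = {rmorphism R -> S} (preserve 0, +, *, 1). *)
From HB Require Import structures.
From mathcomp Require Import all_boot all_order all_algebra.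
Set Implicit Arguments. Unset Strict Implicit. Unset Printing Implicit Defensive.
Import GRing.Theory.
Local Open Scope ring_scope.

Definition is_ideal (R : pzRingType) (I : R -> Prop) : Prop :=
  [/\ I 0,
      (forall x y, I x -> I y -> I (x - y)),
      (forall r x, I x -> I (r * x)) &
      (forall r x, I x -> I (x * r))].

Definition ideal_mul (R : pzRingType) (I J : R -> Prop) : R -> Prop :=
  fun x => exists s : seq (R * R),
    (forall p, p \in s -> I p.1 /\ J p.2) /\ x = \sum_(p <- s) p.1 * p.2.

Definition prime_ideal (R : pzRingType) (P : R -> Prop) : Prop :=
  [/\ is_ideal P,
      (exists x, ~ P x) &
      (forall I J : R -> Prop, is_ideal I -> is_ideal J ->
         (forall x, ideal_mul I J x -> P x) ->
         (forall x, I x -> P x) \/ (forall x, J x -> P x))].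

Definition prime_spectrum (R : pzRingType) : Type := {P : R -> Prop | prime_ideal P}.

Definition is_contra_functor (F : pzRingType -> Type)
  (Fmap : forall R S : pzRingType, {rmorphism R -> S} -> F S -> F R) : Prop :=
  (forall (R : pzRingType) (h : {rmorphism R -> R}),
      h =1 id -> forall x, Fmap R R h x = x) /\
  (forall (R S T : pzRingType) (f : {rmorphism R -> S}) (g : {rmorphism S -> T})
          (h : {rmorphism R -> T}),
      h =1 g \o f -> forall x, Fmap R T h x = Fmap R S f (Fmap S T g x)).

(* The restriction of (F, Fmap) to commutative rings is naturally isomorphic to
   Spec: a family of bijections eta_A : F A -> Spec A, natural w.r.t. ring
   homomorphisms f : A -> B between commutative rings, where Spec f is
   P |-> f^{-1}(P). *)
Definition restricts_to_Spec (F : pzRingType -> Type)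
  (Fmap : forall R S : pzRingType, {rmorphism R -> S} -> F S -> F R) : Prop :=
  exists eta : forall A : comPzRingType, F A -> prime_spectrum A,
    (forall A : comPzRingType, bijective (eta A)) /\
    (forall (A B : comPzRingType) (f : {rmorphism A -> B}) (x : F B) (a : A),
        proj1_sig (eta A (Fmap A B f x)) a <-> proj1_sig (eta B x) (f a)).

From HB Require Import structures.
From mathcomp Require Import all_boot all_order all_algebra.
From Stdlib Require Import Classical ClassicalEpsilon.
Set Implicit Arguments. Unset Strict Implicit. Unset Printing Implicit Defensive.
Import GRing.Theory.
Local Open Scope ring_scope.

(* The zero ideal of the simple ring M_4(Q) is prime, so F(M_4(Q)) has a point x.
   A complete family e_1, ..., e_n of orthogonal idempotents of a Q-algebra A gives a
   ring morphism Q^n -> A, and a prime of Q^n avoids exactly one standard idempotent.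
   Pulling x back to Q^2 along the morphism attached to the projection onto a line
   colours that line.  For every orthogonal basis containing the line this morphism
   factors through Q^4 -> M_4(Q), so functoriality and naturality of Spec show that
   every orthogonal basis contains exactly one coloured line.  This is impossible
   for Cabello's 18 vectors in 9 bases (a Kochen-Specker configuration): each vector
   lies in exactly two bases, so the number of coloured incidences is even, yet it
   is 9. *)

Definition asbool (P : Prop) : bool :=
  if excluded_middle_informative P then true else false.

Lemma asboolP (P : Prop) : reflect P (asbool P).
Proof. by rewrite /asbool; case: excluded_middle_informative => h; constructor. Qed.

Lemma asbool_iff (P Q : Prop) : (P <-> Q) -> asbool P = asbool Q.
Proof. by move=> PQ; apply/idP/idP => /asboolP/PQ/asboolP. Qed.

Lemma mem_iota_ord n (i : 'I_n) : (i : nat) \in iota 0 n.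
Proof. by rewrite mem_iota ltn_ord. Qed.

Lemma count_nth_unique (T : Type) (x0 : T) (c : pred T) (s : seq T)
    (i0 : 'I_(size s)) :
  c (nth x0 s i0) -> (forall i : 'I_(size s), c (nth x0 s i) -> i = i0) ->
  count c s = 1%N.
Proof.
move=> ci0 c_uniq; rewrite -sum1_count (big_nth x0) big_mkord.
rewrite (bigD1 i0) //= big1 ?addn0 // => i /andP[ci].
by rewrite (c_uniq i ci) eqxx.
Qed.

Section Ideals.
Variables (R : pzRingType) (I : R -> Prop).
Hypothesis I_ideal : is_ideal I.

Lemma ideal0 : I 0. Proof. by case: I_ideal. Qed.

Lemma idealB x y : I x -> I y -> I (x - y).
Proof. by case: I_ideal => _ h _ _; apply: h. Qed.

Lemma idealMl r x : I x -> I (r * x).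
Proof. by case: I_ideal => _ _ h _; apply: h. Qed.

Lemma idealD x y : I x -> I y -> I (x + y).
Proof.
move=> Ix Iy; rewrite -[y]opprK; apply: idealB => //.
by rewrite -sub0r; apply: idealB => //; apply: ideal0.
Qed.

Lemma ideal_sum (J : Type) (r : seq J) (P : pred J) (F : J -> R) :
  (forall j, P j -> I (F j)) -> I (\sum_(j <- r | P j) F j).
Proof. by move=> IF; apply: big_ind => //; [exact: ideal0 | exact: idealD]. Qed.

End Ideals.

Section CommutativePrimeIdeals.
Variables (R : comPzRingType) (p : R -> Prop).
Hypothesis p_prime : prime_ideal p.

Let p_ideal : is_ideal p. Proof. by case: p_prime. Qed.

Lemma prime_ideal_neq1 : ~ p 1.
Proof.
move=> p1; case: p_prime => _ [x px] _; apply: px.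
by rewrite -[x]mulr1; apply: idealMl.
Qed.

Lemma prime_ideal_mul a b : p (a * b) -> p a \/ p b.
Proof.
move=> pab; pose principal c (x : R) := exists r, x = r * c.
have principal_ideal c : is_ideal (principal c).
  split=> [|x y [r ->] [s ->]|t x [r ->]|t x [r ->]].
  - by exists 0; rewrite mul0r.
  - by exists (r - s); rewrite mulrBl.
  - by exists (t * r); rewrite mulrA.
  - by exists (r * t); rewrite mulrAC.
have pab_ideal x : ideal_mul (principal a) (principal b) x -> p x.
  move=> [s [s_principal ->]]; rewrite big_seq; apply: ideal_sum => // q /s_principal.
  by move=> [[r ->] [t ->]]; rewrite mulrACA; apply: idealMl.
case: p_prime => _ _ /(_ _ _ (principal_ideal a) (principal_ideal b) pab_ideal).
by case=> h; [left | right]; apply: h; exists 1; rewrite mul1r.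
Qed.

End CommutativePrimeIdeals.

Definition idempotent_frame (R : pzRingType) (I : finType) (e : I -> R) : Prop :=
  \sum_i e i = 1 /\ (forall i j, i != j -> e i * e j = 0).

Section IdempotentFrames.
Variables (R : pzRingType) (I : finType) (e : I -> R).
Hypothesis e_frame : idempotent_frame e.

Lemma frame_sum_neq i : \sum_(j | j != i) e j = 1 - e i.
Proof.
by case: e_frame => sum_e _; rewrite -sum_e [in RHS](bigD1 i) //= addrAC subrr add0r.
Qed.

Lemma frame_idem i : e i * e i = e i.
Proof.
case: e_frame => sum_e orth_e.
rewrite -[RHS]mulr1 -sum_e mulr_sumr (bigD1 i) //= big1 ?addr0 // => j.
by rewrite eq_sym; apply: orth_e.
Qed.

End IdempotentFrames.

Lemma prime_frame (R : comPzRingType) (p : R -> Prop) (I : finType) (e : I -> R) :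
  prime_ideal p -> idempotent_frame e ->
  exists i, ~ p (e i) /\ forall j, ~ p (e j) -> j = i.
Proof.
move=> p_prime [sum_e orth_e]; have p_ideal : is_ideal p by case: p_prime.
have [i npi] : exists i, ~ p (e i).
  apply: NNPP => all_p; apply: (prime_ideal_neq1 p_prime); rewrite -sum_e.
  by apply: ideal_sum => // i _; apply: NNPP => npi; apply: all_p; exists i.
exists i; split=> // j npj; apply/eqP; apply: contraT => ji.
by have := ideal0 p_ideal; rewrite -(orth_e _ _ ji) => /(prime_ideal_mul p_prime) [].
Qed.

Definition idem_frame (R : pzRingType) (a : R) (b : bool) : R :=
  if b then a else 1 - a.

Lemma idem_frameP (R : pzRingType) (a : R) :
  a * a = a -> idempotent_frame (idem_frame a).
Proof.
move=> aa; split=> [|[] []] //; first by rewrite big_bool /= addrC subrK.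
- by rewrite /= mulrBr mulr1 aa subrr.
- by rewrite /= mulrBl mul1r aa subrr.
Qed.

HB.instance Definition _ (I : finType) (K : comPzRingType) :=
  GRing.PzRing_hasCommutativeMul.Build {ffun I -> K} (@ffun_mulC I K).

Definition ffun_delta (K : pzRingType) (I : finType) (i : I) : {ffun I -> K} :=
  [ffun j => (j == i)%:R].

Lemma ffun_delta_frame (K : pzRingType) (I : finType) :
  idempotent_frame (@ffun_delta K I).
Proof.
split=> [|i j ij]; apply/ffunP=> k; rewrite !ffunE.
  rewrite sum_ffunE (bigD1 k) //= ffunE eqxx big1 ?addr0 // => i.
  by rewrite ffunE eq_sym => /negbTE ->.
by have [-> | _] := eqVneq k i; rewrite ?(negbTE ij) ?mulr0 ?mul0r.
Qed.

Section Comap.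
Variables (K : pzRingType) (I J : finType) (phi : J -> I).

Definition comap (x : {ffun I -> K}) : {ffun J -> K} := [ffun j => x (phi j)].

Lemma comap_zmod : zmod_morphism comap.
Proof. by move=> x y; apply/ffunP=> j; rewrite !ffunE. Qed.

Lemma comap_monoid : monoid_morphism comap.
Proof. by split=> [|x y]; apply/ffunP=> j; rewrite !ffunE. Qed.

HB.instance Definition _ := GRing.isZmodMorphism.Build _ _ comap comap_zmod.
HB.instance Definition _ := GRing.isMonoidMorphism.Build _ _ comap comap_monoid.

End Comap.

Lemma comap_delta (K : pzRingType) (I : finType) (i : I) :
  comap (fun j => j == i) (ffun_delta K true) = ffun_delta K i.
Proof. by apply/ffunP=> j; rewrite !ffunE eqb_id. Qed.

Section FrameEvaluation.
Variables (K : comPzRingType) (A : algType K) (I : finType).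

Definition frame_eval (e : I -> A) (x : {ffun I -> K}) : A := \sum_i x i *: e i.

Lemma frame_eval_zmod e : zmod_morphism (frame_eval e).
Proof.
by move=> x y; rewrite /frame_eval -sumrB; apply: eq_bigr => i _; rewrite !ffunE scalerBl.
Qed.

HB.instance Definition _ e :=
  GRing.isZmodMorphism.Build _ _ (frame_eval e) (frame_eval_zmod e).

Lemma frame_eval_monoid e : idempotent_frame e -> monoid_morphism (frame_eval e).
Proof.
move=> e_frame; have [sum_e orth_e] := e_frame.
split=> [|x y]; first by rewrite -sum_e; apply: eq_bigr => i _; rewrite ffunE scale1r.
rewrite /frame_eval mulr_suml; apply: eq_bigr => i _.
rewrite mulr_sumr (bigD1 i) //= big1 ?addr0 => [|j ji].
  by rewrite -scalerAl -scalerAr scalerA frame_idem // ffunE.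
by rewrite -scalerAl -scalerAr orth_e 1?eq_sym // !scaler0.
Qed.

Definition frame_rmorphism e (e_frame : idempotent_frame e) :
    {rmorphism {ffun I -> K} -> A} :=
  HB.pack (frame_eval e)
    (GRing.isMonoidMorphism.Build _ _ _ (frame_eval_monoid e_frame)).

End FrameEvaluation.

Lemma frame_eval_comap (K : comPzRingType) (A : algType K) (I : finType) (e : I -> A)
    (e_frame : idempotent_frame e) (i : I) (x : {ffun bool -> K}) :
  frame_eval (idem_frame (e i)) x = frame_eval e (comap (fun j => j == i) x).
Proof.
rewrite /frame_eval big_bool /= (bigD1 i) //= ffunE eqxx; congr (_ + _).
rewrite -(frame_sum_neq e_frame) scaler_sumr; apply: eq_bigr => j /negbTE ji.
by rewrite ffunE ji.
Qed.

Section LineProjection.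
Variables (K : fieldType) (n : nat).

Definition line_proj (u : 'rV[K]_n) : 'M[K]_n := ((u *m u^T) 0 0)^-1 *: (u^T *m u).

Lemma mul_line_proj u v : line_proj u *m line_proj v =
  (((u *m u^T) 0 0)^-1 * ((v *m v^T) 0 0)^-1 * (u *m v^T) 0 0) *: (u^T *m v).
Proof.
rewrite /line_proj -scalemxAl -scalemxAr scalerA !mulmxA -[u^T *m u *m v^T]mulmxA.
by rewrite [u *m v^T]mx11_scalar mul_mx_scalar -scalemxAl scalerA -mx11_scalar.
Qed.

Lemma line_proj_idem u : line_proj u *m line_proj u = line_proj u.
Proof.
rewrite mul_line_proj /line_proj; have [-> | u0] := eqVneq ((u *m u^T) 0 0) 0.
  by rewrite invr0 !mul0r.
by rewrite -mulrA mulVf ?mulr1.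
Qed.

Lemma line_proj_orth u v : (u *m v^T) 0 0 = 0 -> line_proj u *m line_proj v = 0.
Proof. by move=> uv; rewrite mul_line_proj uv mulr0 scale0r. Qed.

End LineProjection.

Lemma delta_sandwichE (R : pzRingType) m n p q (a : 'M[R]_(m, n)) (b : 'M[R]_(p, q))
    i j k l :
  (a *m delta_mx j k *m b) i l = a i j * b k l.
Proof.
rewrite -(mul_delta_mx (0 : 'I_1)) mulmxA -colE -mulmxA -rowE mxE big_ord1.
by rewrite !mxE.
Qed.

Lemma mx_zero_prime_ideal (R : idomainType) n :
  prime_ideal (fun a : 'M[R]_n.+1 => a = 0).
Proof.
split.
- by split=> [|x y -> ->|r x ->|r x ->]; rewrite ?subrr ?mulr0 ?mul0r.
- by exists 1; apply/eqP; apply: oner_neq0.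
move=> I J [_ _ _ I_Mr] _ IJ0.
case: (classic (forall a, I a -> a = 0)) => [|nI0]; first by left.
have [a [Ia a0]] : exists a, I a /\ a <> 0.
  by apply: NNPP => h; apply: nI0 => a Ia; apply: NNPP => a0; apply: h; exists a.
right=> b Jb; apply: NNPP => b0.
have entry_neq0 (c : 'M[R]_n.+1) : c <> 0 -> exists i j, c i j != 0.
  move=> c0; apply: NNPP => h; apply: c0; apply/matrixP => i j; rewrite mxE.
  by apply: NNPP => cij; apply: h; exists i, j; apply/eqP.
have [[i [j aij]] [k [l bkl]]] := (entry_neq0 a a0, entry_neq0 b b0).
have ajkb0 : a *m delta_mx j k *m b = 0.
  apply: IJ0; exists [:: (a *m delta_mx j k, b)]; split; last by rewrite big_seq1.
  by move=> q; rewrite inE => /eqP ->; split=> //; apply: I_Mr.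
move/matrixP/(_ i l): ajkb0; rewrite delta_sandwichE mxE => /eqP.
by rewrite mulf_eq0 (negbTE aij) (negbTE bkl).
Qed.

Definition cabello_vectors : seq (seq rat) :=
  [:: [:: 0; 0; 0; 1]; [:: 0; 0; 1; 0]; [:: 1; -1; 0; 0]; [:: 1; 1; 0; 0];
      [:: 0; 1; -1; 0]; [:: 0; 1; 1; 0]; [:: 1; 0; 0; 0]; [:: 0; 0; 1; -1];
      [:: 1; -1; -1; -1]; [:: 1; -1; 1; 1]; [:: 1; 1; -1; -1]; [:: 1; 1; 1; 1];
      [:: 0; 1; 0; -1]; [:: 0; 1; 0; 1]; [:: 1; 0; 0; 1]; [:: 1; 1; 1; -1];
      [:: 1; -1; 1; -1]; [:: 1; 0; -1; 0]].

Definition cabello_bases : seq (seq nat) :=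
  [:: [:: 0; 1; 2; 3]; [:: 0; 4; 5; 6]; [:: 7; 8; 9; 3]; [:: 7; 2; 10; 11];
      [:: 1; 12; 13; 6]; [:: 4; 8; 14; 15]; [:: 12; 16; 17; 11];
      [:: 13; 9; 17; 15]; [:: 5; 16; 14; 10]]%N.

Lemma cabello_double_cover :
  perm_eq (flatten cabello_bases) (iota 0 18 ++ iota 0 18).
Proof. by vm_compute. Qed.

Lemma cabello_uncolourable (c : pred nat) :
  ~ (forall b, b \in cabello_bases -> count c b = 1%N).
Proof.
move=> c1; have /permP/(_ c) := cabello_double_cover.
rewrite count_flatten count_cat (eq_in_map _ (fun=> 1%N) _).1 // addnn.
by move/(congr1 odd); rewrite odd_double.
Qed.

Definition cabello_vector (v : nat) : seq rat := nth [::] cabello_vectors v.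

Definition cabello_row (v : nat) : 'rV[rat]_4 := \row_a (cabello_vector v)`_a.

(* [dot4] and the [foldr] below are spelled out because the checks must evaluate
   under [vm_compute], which cannot unfold the opaque big operators. *)
Definition dot4 (s t : seq rat) : rat :=
  s`_0 * t`_0 + s`_1 * t`_1 + s`_2 * t`_2 + s`_3 * t`_3.

Lemma cabello_row_dot v w :
  (cabello_row v *m (cabello_row w)^T) 0 0 =
  dot4 (cabello_vector v) (cabello_vector w).
Proof. by rewrite mxE !big_ord_recr big_ord0 /= add0r !mxE. Qed.

Lemma line_proj_cabelloE v a c :
  line_proj (cabello_row v) a c =
  (cabello_vector v)`_a * (cabello_vector v)`_c
    / dot4 (cabello_vector v) (cabello_vector v).
Proof. by rewrite mxE cabello_row_dot mxE big_ord1 !mxE mulrC. Qed.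

Definition cabello_orthogonal : bool :=
  all (fun b => all (fun i => all (fun j =>
    (i == j) ||
    (dot4 (cabello_vector (nth 0%N b i)) (cabello_vector (nth 0%N b j)) == 0))
    (iota 0 (size b))) (iota 0 (size b))) cabello_bases.

Definition cabello_resolution : bool :=
  all (fun b => all (fun a => all (fun c =>
    foldr +%R 0 [seq (cabello_vector v)`_a * (cabello_vector v)`_c
                       / dot4 (cabello_vector v) (cabello_vector v) | v <- b]
      == (a == c)%:R)
    (iota 0 4)) (iota 0 4)) cabello_bases.

Lemma cabello_frame b : b \in cabello_bases ->
  idempotent_frame (fun i : 'I_(size b) => line_proj (cabello_row (nth 0%N b i))).
Proof.
move=> b_in; split=> [|i j ij].
  apply/matrixP=> a c; rewrite summxE mxE.
  pose entry v := (cabello_vector v)`_a * (cabello_vector v)`_c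
                  / dot4 (cabello_vector v) (cabello_vector v).
  rewrite (eq_bigr (fun i : 'I_(size b) => entry (nth 0%N b i))) => [|i _].
    rewrite -(big_mkord xpredT (fun i => entry (nth 0%N b i))).
    rewrite -(big_nth 0%N xpredT entry).
    have : cabello_resolution by vm_compute.
    move/allP/(_ b b_in)/allP/(_ a (mem_iota_ord a))/allP/(_ c (mem_iota_ord c))/eqP.
    by rewrite foldrE big_map.
  exact: line_proj_cabelloE.
apply: line_proj_orth; rewrite cabello_row_dot.
have : cabello_orthogonal by vm_compute.
move/allP/(_ b b_in)/allP/(_ i (mem_iota_ord i))/allP/(_ j (mem_iota_ord j)).
by rewrite val_eqE (negbTE ij) => /eqP.
Qed.

Section SpecExtension.
Variables (F : pzRingType -> Type)
  (Fmap : forall R S : pzRingType, {rmorphism R -> S} -> F S -> F R)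
  (eta : forall A : comPzRingType, F A -> prime_spectrum A).
Hypothesis Fmap_comp :
  forall (R S T : pzRingType) (f : {rmorphism R -> S}) (g : {rmorphism S -> T})
         (h : {rmorphism R -> T}),
    h =1 g \o f -> forall x, Fmap h x = Fmap f (Fmap g x).
Hypothesis eta_natural :
  forall (A B : comPzRingType) (f : {rmorphism A -> B}) (x : F B) (a : A),
    proj1_sig (eta (Fmap f x)) a <-> proj1_sig (eta x) (f a).

Lemma spec_point_factor (R : pzRingType) (x : F R) (A B : comPzRingType)
    (f : {rmorphism A -> B}) (g : {rmorphism B -> R}) (h : {rmorphism A -> R}) :
  h =1 g \o f ->
  forall a, proj1_sig (eta (Fmap h x)) a <-> proj1_sig (eta (Fmap g x)) (f a).
Proof. by move=> hgf a; rewrite (Fmap_comp hgf); apply: eta_natural. Qed.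

Definition line_colour (x : F 'M[rat]_4) (v : nat) : bool :=
  let h := frame_rmorphism (idem_frameP (line_proj_idem (cabello_row v))) in
  ~~ asbool (proj1_sig (eta (Fmap h x)) (ffun_delta rat true)).

Lemma line_colour_basis (x : F 'M[rat]_4) b :
  b \in cabello_bases -> count (line_colour x) b = 1%N.
Proof.
move=> b_in; have b_frame := cabello_frame b_in.
pose q := eta (Fmap (frame_rmorphism b_frame) x).
have [i0 [qi0 q_uniq]] := prime_frame (proj2_sig q) (ffun_delta_frame rat _).
have colourE (i : 'I_(size b)) :
    line_colour x (nth 0%N b i) = ~~ asbool (proj1_sig q (ffun_delta rat i)).
  rewrite /line_colour -(comap_delta rat i); congr (~~ _); apply: asbool_iff.
  by apply: spec_point_factor => y; apply: frame_eval_comap.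
apply: (count_nth_unique (x0 := 0%N) (i0 := i0)).
  by rewrite colourE; apply/negP => /asboolP.
by move=> i; rewrite colourE => /negP ni; apply: q_uniq => /asboolP.
Qed.

Lemma matrix_point_contradiction (x : F 'M[rat]_4) : False.
Proof.
by apply: (cabello_uncolourable (c := line_colour x)) => b; apply: line_colour_basis.
Qed.

End SpecExtension.

Theorem corollary4p4 :
  ~ exists (F : pzRingType -> Type)
           (Fmap : forall R S : pzRingType, {rmorphism R -> S} -> F S -> F R),
      [/\ is_contra_functor Fmap,
          restricts_to_Spec Fmap &
          forall R : pzRingType, exists g : F R -> prime_spectrum R, bijective g].
Proof.
case=> F [Fmap [[_ Fmap_comp] [eta [_ eta_natural]] F_spec]].
have [_ [point _ _]] := F_spec 'M[rat]_4.
exact: (matrix_point_contradiction Fmap_comp eta_natural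
          (point (exist _ _ (mx_zero_prime_ideal _ _)))).
Qed.
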